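(* Let $(Q,\mathcal M)$ be a modulated quiver with $\mathcal M$ v-uniform, $I$ an admissible ideal of $T(Q,\mathcal M)$, $\Psi$ a complexification isomorphism and $J=\Psi(\mathbf e(I\otimes_{\mathbb R}\mathbb C)\mathbf e)$. Then a vertex $v$ of $Q$ is gentle in $(Q,R_I)$ if and only if every fiber of $v$ in $\Gamma$ is gentle in $(\Gamma,J)$.
   Context: Quivers $Q=(Q_0,Q_1,s,t)$ are finite; an arrow $\alpha$ goes from $s(\alpha)$ to $t(\alpha)$. Paths are written from right to left: a path of length $n\ge1$ is $p=\alpha_n\cdots\alpha_1$ with $t(\alpha_k)=s(\alpha_{k+1})$; each vertex $i$ has a trivial path $e_i$. For a division ring $D$, $DQ$ denotes the path algebra of $Q$ over $D$ (free left $D$-module on the paths, scalars commuting with paths, multiplication by concatenation). Let $\mathbb H=\{\begin{bmatrix}a&b\\-\bar b&\bar a\end{bmatrix}:a,b\in\mathbb C\}\subset M_2(\mathbb C)$ be the real quaternions. A modulation $\mathcal M$ of $Q$ assigns to each vertex $i$ a division ring $\mathcal M(i)\in\{\mathbb R,\mathbb C,\mathbb H\}$ and to each arrow $\alpha$ a simple $\mathcal M(t(\alpha))$-$\mathcal M(s(\alpha))$-bimodule $\mathcal M(\alpha)$ on which $\mathbb R$ acts centrally; $(Q,\mathcal M)$ is a modulated quiver. Up to isomorphism there is exactly one such simple bimodule for each pair of these division rings other than $(\mathbb C,\mathbb C)$, and for $(\mathbb C,\mathbb C)$ there are exactly two: $\mathbb C$ with action $a\cdot z\cdot b=azb$, and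 $\overline{\mathbb C}$, which is $\mathbb C$ as a set with action $a\cdot z\cdot b=az\bar b$. For a path $p=\alpha_n\cdots\alpha_1$ put $\mathcal M(p)=\mathcal M(\alpha_n)\otimes_{\mathcal M(s(\alpha_n))}\cdots\otimes_{\mathcal M(s(\alpha_2))}\mathcal M(\alpha_1)$, and $\mathcal M(e_i)=\mathcal M(i)$. The tensor algebra is $T(Q,\mathcal M)=\prod_{i\in Q_0}\mathcal M(i)\oplus\bigoplus_{p}\mathcal M(p)$ (sum over paths of length $\ge1$). An ideal $I$ of $T(Q,\mathcal M)$ is admissible if $A^m\subseteq I\subseteq A^2$ for some $m\ge2$, where $A$ is the ideal generated by $\bigoplus_{\alpha\in Q_1}\mathcal M(\alpha)$. $\mathcal M$ is v-uniform with $D\in\{\mathbb R,\mathbb C,\mathbb H\}$ if $\mathcal M(i)=D$ for all $i\in Q_0$. Then every $\mathcal M(\alpha)$ has underlying set $D$, and for a path $p$ we write $1_{\mathcal M(p)}=1\otimes\cdots\otimes1\in\mathcal M(p)$ ($1_{\mathcal M(e_i)}$ being the identity of $\mathcal M(i)$). For an ideal $I$ of $T(Q,\mathcal M)$ put $R_I=\{\sum_k d_kp_k\in DQ:\ \sum_k d_k1_{\mathcal M(p_k)}\in I\}$, an ideal of $DQ$. The quiver $\Gamma$ of $(Q,\mathcal M)$: each $i\in Q_0$ with $\mathcal M(i)\in\{\mathbb R,\mathbb H\}$ gives one vertex $i$ of $\Gamma$; each $i$ with $\mathcal M(i)=\mathbb C$ gives two vertices $i,\bar i$. Each arrow $\alpha:i\to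 j$ of $Q$ gives arrows of $\Gamma$ as follows: if $\mathcal M(i)=\mathcal M(j)\in\{\mathbb R,\mathbb H\}$, one arrow $\alpha:i\to j$; if $\mathcal M(i)=\mathbb C$ and $\mathcal M(j)\in\{\mathbb R,\mathbb H\}$, arrows $\alpha:i\to j$, $\bar\alpha:\bar i\to j$; if $\mathcal M(i)\in\{\mathbb R,\mathbb H\}$ and $\mathcal M(j)=\mathbb C$, arrows $\alpha:i\to j$, $\bar\alpha:i\to\bar j$; if $\{\mathcal M(i),\mathcal M(j)\}=\{\mathbb R,\mathbb H\}$, two arrows $\alpha,\bar\alpha:i\to j$; if $\mathcal M(i)=\mathcal M(j)=\mathbb C$ and $\mathcal M(\alpha)=\mathbb C$, arrows $\alpha:i\to j$, $\bar\alpha:\bar i\to\bar j$; if $\mathcal M(i)=\mathcal M(j)=\mathbb C$ and $\mathcal M(\alpha)=\overline{\mathbb C}$, arrows $\alpha:\bar i\to j$, $\bar\alpha:i\to\bar j$. The map $\pi:\Gamma\to Q$ sends $i,\bar i\mapsto i$ and $\alpha,\bar\alpha\mapsto\alpha$. A vertex or arrow $x$ of $\Gamma$ is a fiber of $\pi(x)$; a path $\beta_n\cdots\beta_1$ of $\Gamma$ is a fiber of the path $\pi(\beta_n)\cdots\pi(\beta_1)$ of $Q$, and the fibers of a trivial path $e_i$ are the trivial paths $e_{i'}$ with $i'$ a fiber of $i$. Identify $\mathbb R\otimes_{\mathbb R}\mathbb C=\mathbb C$, $\mathbb H\otimes_{\mathbb R}\mathbb C\cong M_2(\mathbb C)$ via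 $h\otimes c\mapsto ch$, and $\mathbb C\otimes_{\mathbb R}\mathbb C\cong\mathbb C\times\mathbb C$ via $a\otimes b\mapsto(ab,\bar ab)$. Let $\mathbf e=(\epsilon_i)_{i\in Q_0}\in\prod_i\mathcal M(i)\otimes_{\mathbb R}\mathbb C\subseteq T(Q,\mathcal M)\otimes_{\mathbb R}\mathbb C$, where $\epsilon_i=1$ if $\mathcal M(i)\in\{\mathbb R,\mathbb C\}$ and $\epsilon_i$ corresponds to the matrix unit $\begin{bmatrix}1&0\\0&0\end{bmatrix}$ if $\mathcal M(i)=\mathbb H$. A complexification isomorphism for $(Q,\mathcal M)$ is a $\mathbb C$-algebra isomorphism $\Psi:\mathbf e(T(Q,\mathcal M)\otimes_{\mathbb R}\mathbb C)\mathbf e\to\mathbb C\Gamma$ such that for every path $p$ of $Q$ (trivial or not), $\Psi(\mathbf e(\mathcal M(p)\otimes_{\mathbb R}\mathbb C)\mathbf e)=\bigoplus_q\mathbb Cq$, the sum over all fibers $q$ of $p$ in $\Gamma$; such isomorphisms exist. Gentle vertices. Let $k$ be a division ring, $Q$ a quiver and $R$ an ideal of $kQ$. A vertex $v$ is gentle in $(Q,R)$ if: (1) at most two arrows start at $v$ and at most two arrows end at $v$; (2) for all arrows $\alpha,\beta,\gamma$ with $\beta\ne\gamma$ and $t(\beta)=t(\gamma)=s(\alpha)=v$, exactly one of $\alpha\beta,\alpha\gamma$ belongs to $R$; (3) for all arrows $\alpha,\gamma,\beta$ with $\alpha\ne\gamma$ and $s(\alpha)=s(\gamma)=t(\beta)=v$,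 exactly one of $\alpha\beta,\gamma\beta$ belongs to $R$. *)

From HB Require Import structures.
From mathcomp Require Import all_boot all_order all_algebra.
From mathcomp Require Import Rstruct complex.

Set Implicit Arguments.
Unset Strict Implicit.
Unset Printing Implicit Defensive.

Import GRing.Theory Num.Theory.
Local Open Scope ring_scope.

Definition RR : rcfType := Rdefinitions.R.
Definition CC : nzRingType := RR[i].

Definition is_quat (M : 'M[CC]_2) : bool :=
  (M 1 1 == conjc (M 0 0)) && (M 1 0 == - conjc (M 0 1)).

Inductive divkind := DR | DC | DH.

(* ambient ring in which the coefficients of D are taken *)
Definition Cty (k : divkind) : nzRingType :=
  match k with DR => RR | DC => CC | DH => 'M[CC]_2 end.

Definition inD (k : divkind) : pred (Cty k) :=
  match k return pred (Cty k) with
  | DR => predT | DC => predT | DH => is_quat end.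

Definition rscal (k : divkind) : RR -> Cty k :=
  match k return RR -> Cty k with
  | DR => fun r => r
  | DC => fun r => Complex r 0
  | DH => fun r => (Complex r 0 : CC)%:M end.

(* complex conjugation on D = C (identity for the other cases; it is only
   used when D = C) *)
Definition dconj (k : divkind) : Cty k -> Cty k :=
  match k return Cty k -> Cty k with
  | DC => fun z => conjc z
  | DR => id | DH => id end.

Arguments inD : clear implicits.
Arguments rscal : clear implicits.
Arguments dconj : clear implicits.

Record quiver := Quiver {
  qV : finType; qA : finType; qs : qA -> qV; qt : qA -> qV }.
Arguments qs {q}.
Arguments qt {q}.

Section Paths.
Variable G : quiver.

(* A (raw) path is a start vertex together with the list of its arrows in
   the order in which they are traversed: (v, [:: a1; ...; an]) stands for
   the path  an ... a1  starting at v;  (v, [::]) is the trivial path e_v. *)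
Definition rpath := (qV G * seq (qA G))%type.

Fixpoint pvalid (v : qV G) (s : seq (qA G)) : bool :=
  if s is a :: s' then (qs a == v) && pvalid (qt a) s' else true.

Definition valid (p : rpath) : bool := pvalid p.1 p.2.

Definition pend (v : qV G) (s : seq (qA G)) : qV G :=
  foldl (fun _ a => qt a) v s.

(* the path  b2 b1  (first b1, then b2), i.e. the product b2*b1 *)
Definition path2 (b2 b1 : qA G) : rpath := (qs b1, [:: b1; b2]).

Variable K : nzRingType.

(* elements of the path algebra (or of a tensor algebra of a v-uniform
   modulation): coefficient functions on paths *)
Definition elt := rpath -> K.

Definition fin_supp (f : elt) : Prop :=
  exists r : seq rpath, forall p, p \notin r -> f p = 0.
Definition valid_supp (f : elt) : Prop :=
  forall p, ~~ valid p -> f p = 0.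
Definition palg (f : elt) : Prop := fin_supp f /\ valid_supp f.

Definition pzero : elt := fun _ => 0.
Definition padd (f g : elt) : elt := fun p => f p + g p.
Definition pone : elt := fun p => if p.2 is [::] then 1 else 0.
Definition pbasis (x : rpath) : elt := fun p => if p == x then 1 else 0.

(* twisted multiplication:  (d p) (d' q) = d sig_p(d') (p q);
   sig s is the twist attached to the path with arrow list s *)
Definition pmul (sig : seq (qA G) -> K -> K) (f g : elt) : elt :=
  fun p => \sum_(j < (size p.2).+1)
     f (pend p.1 (take j p.2), drop j p.2) * sig (drop j p.2) (g (p.1, take j p.2)).

End Paths.
Arguments pzero {G K}.
Arguments pone {G K}.

Definition exactly_one (P1 P2 : Prop) : Prop := (P1 /\ ~ P2) \/ (~ P1 /\ P2).

Definition gentle (G : quiver) (K : nzRingType) (Rel : elt G K -> Prop)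
    (v : qV G) : Prop :=
  [/\ #|[set a : qA G | qs a == v]| <= 2,
      #|[set a : qA G | qt a == v]| <= 2,
      (forall a b c : qA G, b != c -> qt b = v -> qt c = v -> qs a = v ->
         exactly_one (Rel (pbasis K (path2 a b))) (Rel (pbasis K (path2 a c))))
    & (forall a c b : qA G, a != c -> qs a = v -> qs c = v -> qt b = v ->
         exactly_one (Rel (pbasis K (path2 a b))) (Rel (pbasis K (path2 c b))))]%N.

(* A v-uniform modulation: all vertices get D = vk; when D = C, the arrows
   with  vtw a = true  get the bimodule Cbar, the others get C.  (When
   D = R or H, every bimodule is D itself and vtw is irrelevant.) *)
Record vumod (Q : quiver) := VUMod { vk : divkind; vtw : qA Q -> bool }.

Section Tensor.
Variables (Q : quiver) (M : vumod Q).
Local Notation k := (vk M).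
Local Notation D := (Cty k).

(* the twist sigma_p : for a path p,  1_{M(p)} d = sigma_p(d) 1_{M(p)} *)
Definition Tsig (s : seq (qA Q)) : D -> D :=
  if odd (count (vtw M) s) then dconj k else id.

(* Model of T(Q,M): element  sum_p f(p) 1_{M(p)}  is represented by its
   coefficient function f : paths -> D (M(p) = D 1_{M(p)}). *)
Definition Tel (f : elt Q D) : Prop := palg f /\ forall p, inD k (f p).
Definition Tmul : elt Q D -> elt Q D -> elt Q D := pmul Tsig.

Definition DQel (f : elt Q D) : Prop := palg f /\ forall p, inD k (f p).

Definition Tideal (I : elt Q D -> Prop) : Prop :=
  [/\ forall f, I f -> Tel f,
      I pzero,
      forall f g, I f -> I g -> I (padd f g),
      forall f, I f -> I (fun p => - f p)
    & forall a f, Tel a -> I f -> I (Tmul a f) /\ I (Tmul f a)].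

Definition Tgen (S : elt Q D -> Prop) : elt Q D -> Prop :=
  fun f => forall I, Tideal I -> (forall g, S g -> I g) -> I f.

Definition Tprod (I1 I2 : elt Q D -> Prop) : elt Q D -> Prop :=
  Tgen (fun f => exists x y, I1 x /\ I2 y /\ f = Tmul x y).

(* the arrow ideal A, generated by the sum of the M(alpha) *)
Definition Tarrows : elt Q D -> Prop :=
  Tgen (fun f => Tel f /\ forall p, size p.2 != 1%N -> f p = 0).

Fixpoint Tpow (m : nat) : elt Q D -> Prop :=
  match m with
  | 0 => Tel
  | 1 => Tarrows
  | m'.+1 => Tprod (Tpow m') Tarrows
  end.

Definition admissible (I : elt Q D -> Prop) : Prop :=
  Tideal I /\
  exists m, (2 <= m)%N /\ (forall f, Tpow m f -> I f) /\ (forall f, I f -> Tpow 2 f).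

(* R_I = { sum d_k p_k in DQ : sum d_k 1_{M(p_k)} in I }; in the coefficient
   model the map  sum d_k p_k |-> sum d_k 1_{M(p_k)}  is the identity on
   coefficient functions. *)
Definition toT (f : elt Q D) : elt Q D := f.
Definition R_I (I : elt Q D -> Prop) : elt Q D -> Prop :=
  fun f => DQel f /\ I (toT f).

(* Complexification  T (x)_R C  =  T + T i  (pairs (x, y) = x(x)1 + y(x)i) *)

Definition TC := (elt Q D * elt Q D)%type.
Definition TCel (z : TC) : Prop := Tel z.1 /\ Tel z.2.

Definition rsc (r : RR) (f : elt Q D) : elt Q D := fun p => rscal k r * f p.

Definition TCadd (z w : TC) : TC := (padd z.1 w.1, padd z.2 w.2).
Definition TCmul (z w : TC) : TC :=
  (padd (Tmul z.1 w.1) (fun p => - Tmul z.2 w.2 p),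
   padd (Tmul z.1 w.2) (Tmul z.2 w.1)).
Definition TCscale (c : CC) (z : TC) : TC :=
  (padd (rsc (complex.Re c) z.1) (fun p => - rsc (complex.Im c) z.2 p),
   padd (rsc (complex.Im c) z.1) (rsc (complex.Re c) z.2)).

(* coordinates (x, y) of eps_i = x (x) 1 + y (x) i in M(i) (x)_R C:
   eps_i = 1 for D = R, C;  for D = H, under h (x) c |-> c h,
   (1/2) 1 (x) 1 - (1/2) diag(i,-i) (x) i  |->  1/2 + 1/2 diag(1,-1) = E_11 *)
Definition epsK : Cty k * Cty k :=
  match vk M as k0 return Cty k0 * Cty k0 with
  | DR => (1, 0)
  | DC => (1, 0)
  | DH => ((Complex 2^-1 0 : CC)%:M : 'M[CC]_2,
           - diag_mx (\row_(j < 2) (if j == 0 then (Complex 0 2^-1 : CC)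
                                     else (Complex 0 (- 2^-1) : CC)) : 'rV[CC]_2))
  end.

Definition Te : TC :=
  ((fun p => if p.2 is [::] then epsK.1 else 0),
   (fun p => if p.2 is [::] then epsK.2 else 0)).

Definition eTe (z : TC) : Prop := exists w, TCel w /\ z = TCmul (TCmul Te w) Te.

Definition eIe (I : elt Q D -> Prop) (z : TC) : Prop :=
  exists w, I w.1 /\ I w.2 /\ z = TCmul (TCmul Te w) Te.

Definition supp_on (p : rpath Q) (f : elt Q D) : Prop :=
  forall q, q != p -> f q = 0.
Definition eMpe (p : rpath Q) (z : TC) : Prop :=
  exists w, TCel w /\ supp_on p w.1 /\ supp_on p w.2 /\
            z = TCmul (TCmul Te w) Te.

Record cover := Cover {
  cq : quiver; piV : qV cq -> qV Q; piA : qA cq -> qA Q }.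

(* for D = C: vertex (i,false) = i, (i,true) = ibar;
   arrow (a,false) = a, (a,true) = abar.
   If M(a) = C:  a : i -> j, abar : ibar -> jbar;
   if M(a) = Cbar:  a : ibar -> j, abar : i -> jbar. *)
Definition dblQ : quiver :=
  @Quiver (Finite.clone (qV Q * bool)%type _) (Finite.clone (qA Q * bool)%type _)
   (fun a : qA Q * bool => (qs a.1, a.2 (+) vtw M a.1))
   (fun a : qA Q * bool => (qt a.1, a.2)).

Definition Gamma : cover :=
  match k with
  | DC => @Cover dblQ (fun x : qV Q * bool => x.1) (fun a : qA Q * bool => a.1)
  | _ => @Cover Q id id
  end.

Local Notation GQ := (cq Gamma).

Definition is_fiber (q : rpath GQ) (p : rpath Q) : bool :=
  valid q && valid p && (piV q.1 == p.1) && (map (@piA Gamma) q.2 == p.2).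

Definition CGel (g : elt GQ CC) : Prop := palg g.
Definition CGmul : elt GQ CC -> elt GQ CC -> elt GQ CC :=
  pmul (fun _ => id).

Definition cplx_iso (Psi : TC -> elt GQ CC) : Prop :=
  and ([/\ (forall z, eTe z -> CGel (Psi z)),
      (forall z w, eTe z -> eTe w -> Psi (TCadd z w) = padd (Psi z) (Psi w)),
      (forall c z, eTe z -> Psi (TCscale c z) = (fun q => c * Psi z q)),
      (forall z w, eTe z -> eTe w -> Psi (TCmul z w) = CGmul (Psi z) (Psi w))
    & Psi Te = pone])
  ([/\ (forall z w, eTe z -> eTe w -> Psi z = Psi w -> z = w),
      (forall g, CGel g -> exists2 z, eTe z & Psi z = g)
    & (forall p : rpath Q, valid p -> forall g,
         (exists2 z, eMpe p z & Psi z = g) <->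
         (CGel g /\ forall q, ~~ is_fiber q p -> g q = 0))]).

Definition Jideal (Psi : TC -> elt GQ CC) (I : elt Q D -> Prop) : elt GQ CC -> Prop :=
  fun g => exists2 z, eIe I z & Psi z = g.

End Tensor.

From HB Require Import structures.
From mathcomp Require Import all_boot all_order all_algebra.
From mathcomp Require Import Rstruct complex.
From Stdlib Require Import FunctionalExtensionality.

(* Gentleness of a vertex only involves the arrows at that vertex and the
   membership of the length-two paths through it in the relation ideal.
   The proof therefore has two independent halves.

   Combinatorial half: pi : Gamma -> Q is a covering of quivers -- it
   commutes with source and target, and for every vertex w of Gamma it maps
   the arrows starting (ending) at w bijectively onto those starting
   (ending) at pi(w).  For any covering and any two relations on the path
   algebras that agree on composable pairs of arrows through pi, w is
   gentle upstairs iff pi(w) is gentle downstairs (gentle_cover).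

   Algebraic half: for composable arrows a, b of Gamma, the basis path ab
   lies in J iff the basis path pi(a)pi(b) lies in I (J_basis_iff).  Psi
   maps e(M(p) (x) C)e, whose elements are supported on the single path p,
   onto the span of the fibers of p; the preimage of the fiber ab is thus
   a nonzero element supported on p, and, since D is a division ring, I
   contains a nonzero element supported on p iff it contains the basis
   path p.

   The theorem combines the two halves, using that every vertex of Q has
   a fiber. *)

Set Implicit Arguments.
Unset Strict Implicit.
Unset Printing Implicit Defensive.
Import GRing.Theory Num.Theory.
Local Open Scope ring_scope.

Lemma path2_valid (G : quiver) (a b : qA G) : qs a = qt b -> valid (path2 a b).
Proof. by move=> ab; rewrite /valid /= eqxx andbT; apply/eqP. Qed.

Lemma is_quat_scalar (c : CC) : conjc c = c -> is_quat c%:M.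
Proof.
move=> cc; rewrite /is_quat !mxE !eqxx !mulr1n cc eqxx /=.
by rewrite !mulr0n ?(conjc0 RR) ?oppr0 ?eqxx.
Qed.

Lemma inD0 k : inD k 0.
Proof. by case: k => //=; rewrite /is_quat !mxE (conjc0 RR) oppr0 eqxx. Qed.

Lemma inD1 k : inD k 1.
Proof. by case: k => //=; apply: is_quat_scalar; exact: (conjc1 RR). Qed.

Lemma dconj0 k : dconj k 0 = 0.
Proof. by case: k => //=; apply: (conjc0 RR). Qed.

Lemma ord2P (i : 'I_2) : i = 0 \/ i = 1.
Proof. by case: i => [[|[|//]] Hi]; [left|right]; apply: val_inj. Qed.

Lemma is_quatP (d : 'M[RR[i]]_2) :
  reflect (d 1 1 = (d 0 0)^* /\ d 1 0 = - (d 0 1)^*) (is_quat d).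
Proof. by apply: (iffP andP) => -[d11 d10]; split; apply/eqP. Qed.

(* H is a division ring: the inverse of a nonzero quaternion
   [[a, b], [-b^*, a^*]] is (|a|^2 + |b|^2)^-1 [[a^*, -b], [b^*, a]]. *)
Lemma quat_inv (d : 'M[RR[i]]_2) : is_quat d -> d != 0 ->
  exists2 e : 'M[RR[i]]_2, is_quat e & e *m d = 1%:M.
Proof.
case/is_quatP => d11 d10 d_neq0.
set a := d 0 0 in d11 *; set b := d 0 1 in d10 *.
pose n := a * a^* + b * b^*.
have n_neq0 : n != 0.
  apply: contra d_neq0; rewrite /n paddr_eq0 ?mul_conjC_ge0 // !mul_conjC_eq0.
  case/andP => /eqP a0 /eqP b0; apply/eqP/matrixP => i j; rewrite mxE.
  case: (ord2P i) => ->; case: (ord2P j) => -> //.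
  - by rewrite d10 b0 conjC0 oppr0.
  - by rewrite d11 a0 conjC0.
have n_real : n^* = n.
  by rewrite /n rmorphD !rmorphM /= !conjCK mulrC [b^* * _]mulrC addrC.
pose e : 'M[RR[i]]_2 := \matrix_(i, j) (n^-1 *
  (if i == 0 then (if j == 0 then a^* else - b) else (if j == 0 then b^* else a))).
exists e.
  apply/is_quatP; rewrite !mxE /= !rmorphM !fmorphV /= n_real conjCK.
  by rewrite rmorphN mulrN opprK.
apply/matrixP => i j; rewrite !mxE !big_ord_recr big_ord0 /= add0r.
have -> : widen_ord (leqnSn 1) ord_max = 0 :> 'I_2 by apply: val_inj.
have -> : ord_max = 1 :> 'I_2 by apply: val_inj.
rewrite !mxE; case: (ord2P i) => ->; case: (ord2P j) => -> /=;
  rewrite ?d11 ?d10 -/a -/b -!mulrA -mulrDr.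
- by rewrite mulrNN [a^* * a]mulrC mulVf.
- by rewrite mulNr [a^* * b]mulrC subrr mulr0.
- by rewrite mulrN [b^* * a]mulrC subrr mulr0.
- by rewrite addrC [b^* * b]mulrC mulVf.
Qed.

Lemma inD_inv k (d : Cty k) : inD k d -> d != 0 ->
  exists2 e, inD k e & e * d = 1.
Proof.
case: k d => /= d d_in d_neq0.
- by exists d^-1 => //; rewrite mulVf.
- by exists (d : CC)^-1 => //; rewrite mulVf.
- exact: quat_inv.
Qed.

Section TensorAlgebra.
Variables (Q : quiver) (M : vumod Q).
Local Notation D := (Cty (vk M)).

Definition on_vertices (f : elt Q D) : Prop :=
  forall r : rpath Q, r.2 != [::] -> f r = 0.

Definition cst (d : D) : elt Q D := fun r => if r.2 is [::] then d else 0.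

Lemma cst_on_vertices d : on_vertices (cst d).
Proof. by case=> x [|b s]. Qed.

Lemma on_vertices_palg (f : elt Q D) : on_vertices f -> palg f.
Proof.
move=> f_vert; split; last by move=> [x [|b s]] //= _; rewrite f_vert.
exists [seq (x, [::]) | x <- enum (qV Q)] => r; apply: contraNeq => fr_neq0.
case: r fr_neq0 => x s /= fr_neq0; have /eqP -> : s == [::].
  by apply: contraNT fr_neq0 => s_nil; rewrite f_vert.
by apply/mapP; exists x; rewrite ?mem_enum.
Qed.

Lemma pbasis_palg K (p : rpath Q) : valid p -> palg (pbasis K p).
Proof.
move=> vp; split; first by exists [:: p] => r; rewrite inE /pbasis => /negbTE ->.
by move=> r; rewrite /pbasis; case: eqP => // ->; rewrite vp.
Qed.

Lemma cst_Tel d : inD (vk M) d -> Tel (cst d).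
Proof.
move=> d_in; split; first exact/on_vertices_palg/cst_on_vertices.
by case=> x [|b s] //=; apply: inD0.
Qed.

Lemma pbasis_Tel (p : rpath Q) : valid p -> Tel (pbasis D p).
Proof.
move=> vp; split; first exact: pbasis_palg.
by move=> r; rewrite /pbasis; case: ifP => _; [apply: inD1 | apply: inD0].
Qed.

Lemma Tmul_on_vertices_l (a x : elt Q D) r : on_vertices a ->
  Tmul a x r = a (pend r.1 r.2, [::]) * x r.
Proof.
move=> a_vert; rewrite /Tmul /pmul big_ord_recr /= big1 ?add0r.
  by rewrite take_size drop_size -surjective_pairing.
move=> j _; rewrite a_vert ?mul0r //= -size_eq0 size_drop subn_eq0 -ltnNge.
exact: ltn_ord.
Qed.

Lemma Tmul_cst d (x : elt Q D) r : Tmul (cst d) x r = d * x r.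
Proof. exact/Tmul_on_vertices_l/cst_on_vertices. Qed.

(* Elements supported on p form the D-module D p = M(p): it is closed under
   the operations used to build e (M(p) (x) C) e. *)
Lemma supp_padd p (f g : elt Q D) :
  supp_on p f -> supp_on p g -> supp_on p (padd f g).
Proof. by move=> f_p g_p r pr; rewrite /padd f_p // g_p // addr0. Qed.

Lemma supp_opp p (f : elt Q D) : supp_on p f -> supp_on p (fun r => - f r).
Proof. by move=> f_p r pr; rewrite f_p // oppr0. Qed.

Lemma supp_mul_l p (a y : elt Q D) :
  on_vertices a -> supp_on p y -> supp_on p (Tmul a y).
Proof. by move=> a_vert y_p r pr; rewrite Tmul_on_vertices_l // y_p // mulr0. Qed.

Lemma supp_mul_r p (a y : elt Q D) :
  on_vertices a -> supp_on p y -> supp_on p (Tmul y a).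
Proof.
move=> a_vert y_p r pr; rewrite /Tmul /pmul big1 // => j _.
case E: (take j r.2) => [|x s]; last first.
  by rewrite (a_vert (r.1, x :: s)) // /Tsig; case: ifP; rewrite ?dconj0 mulr0.
have -> : drop j r.2 = r.2 by rewrite -[RHS](cat_take_drop j) E.
by rewrite y_p ?mul0r // -surjective_pairing.
Qed.

Lemma supp_on_zero p (f : elt Q D) : supp_on p f -> f p = 0 -> f = pzero.
Proof.
move=> f_p fp0; apply: functional_extensionality => r.
by case: (eqVneq r p) => [->|/f_p].
Qed.

Lemma supp_on_basis p (f : elt Q D) :
  supp_on p f -> f = Tmul (cst (f p)) (pbasis D p).
Proof.
move=> f_p; apply: functional_extensionality => r; rewrite Tmul_cst /pbasis.
by case: eqP => [->|/eqP pr]; rewrite ?mulr1 // f_p // mulr0.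
Qed.

Lemma Te_on_vertices : on_vertices (Te M).1 /\ on_vertices (Te M).2.
Proof. by split; case=> x [|b s]. Qed.

Lemma epsK_inD : inD (vk M) (epsK M).1 /\ inD (vk M) (epsK M).2.
Proof.
rewrite /epsK; case: M => k tw /=; case: k => //=; split.
  by apply: is_quat_scalar; rewrite /= oppr0.
by rewrite /is_quat !mxE /= !mulr1n !mulr0n !eq_complex /= !oppr0 !opprK !eqxx.
Qed.

Lemma Te_Tel : Tel (Te M).1 /\ Tel (Te M).2.
Proof.
have [e1 e2] := Te_on_vertices; have [d1 d2] := epsK_inD.
by split; split; try exact: on_vertices_palg; case=> x [|b s] //=; apply: inD0.
Qed.

End TensorAlgebra.

Section IdealBasis.
Variables (Q : quiver) (M : vumod Q) (I : elt Q (Cty (vk M)) -> Prop).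
Local Notation D := (Cty (vk M)).

Lemma R_I_basis (p : rpath Q) : valid p -> R_I I (pbasis D p) <-> I (pbasis D p).
Proof. by move=> vp; split=> [[]|Ip] //; split=> //; apply: pbasis_Tel. Qed.

Hypothesis I_ideal : Tideal I.

(* Since D is a division ring, an element of I supported on p with a
   nonzero coefficient at p generates the basis path p. *)
Lemma basis_in_ideal (p : rpath Q) (x : elt Q D) :
  I x -> supp_on p x -> x p != 0 -> I (pbasis D p).
Proof.
move=> Ix x_p xp_neq0; have [I_Tel _ _ _ I_mul] := I_ideal.
have [e e_in e_xp] := inD_inv ((I_Tel x Ix).2 p) xp_neq0.
have -> : pbasis D p = Tmul (cst e) x.
  apply: functional_extensionality => r; rewrite Tmul_cst /pbasis.
  by case: eqP => [->|/eqP pr]; rewrite ?e_xp // x_p // mulr0.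
exact: (I_mul _ _ (cst_Tel e_in) Ix).1.
Qed.

Lemma supported_in_ideal (p : rpath Q) (f : elt Q D) :
  I (pbasis D p) -> Tel f -> supp_on p f -> I f.
Proof.
move=> Ip Tf f_p; have [_ _ _ _ I_mul] := I_ideal.
by rewrite (supp_on_basis f_p); apply: (I_mul _ _ (cst_Tel (Tf.2 p)) Ip).1.
Qed.

Lemma eIe_I z : eIe I z -> I z.1 /\ I z.2.
Proof.
case=> w [I1 [I2 ->]]; have [_ _ I_add I_opp I_mul] := I_ideal.
have [T1 T2] := Te_Tel M.
have I_mull a f : Tel a -> I f -> I (Tmul a f) by move=> Ta If; case: (I_mul a f Ta If).
have I_mulr a f : Tel a -> I f -> I (Tmul f a) by move=> Ta If; case: (I_mul a f Ta If).
rewrite /TCmul /=.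
by split; apply: (I_add); try apply: (I_opp); apply: (I_mulr) => //;
   apply: (I_add); try apply: (I_opp); apply: (I_mull).
Qed.

Lemma eIe_eTe z : eIe I z -> eTe z.
Proof.
have [I_Tel _ _ _ _] := I_ideal.
by case=> w [I1 [I2 ->]]; exists w; split; split; apply: I_Tel.
Qed.

End IdealBasis.

Lemma eMpe_supp Q (M : vumod Q) (p : rpath Q) (z : TC M) :
  eMpe p z -> supp_on p z.1 /\ supp_on p z.2.
Proof.
case=> w [_ [S1 [S2 ->]]]; have [e1 e2] := Te_on_vertices M.
by split; apply: supp_padd; try apply: supp_opp; apply: supp_mul_r => //;
   apply: supp_padd; try apply: supp_opp; apply: supp_mul_l.
Qed.

Lemma eMpe_eTe Q (M : vumod Q) (p : rpath Q) (z : TC M) : eMpe p z -> eTe z.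
Proof. by case=> w [Tw [_ [_ ->]]]; exists w. Qed.

Lemma exactly_one_iff (P1 P2 Q1 Q2 : Prop) :
  (P1 <-> Q1) -> (P2 <-> Q2) -> exactly_one P1 P2 <-> exactly_one Q1 Q2.
Proof. rewrite /exactly_one; tauto. Qed.

Section Covering.
(* pV, pA : G -> Q is a morphism of quivers which is bijective on the
   arrows starting, resp. ending, at any given vertex. *)
Variables (G Q : quiver) (pV : qV G -> qV Q) (pA : qA G -> qA Q).
Hypothesis pA_s : forall x, pV (qs x) = qs (pA x).
Hypothesis pA_t : forall x, pV (qt x) = qt (pA x).
Hypothesis lift_s : forall w b, qs b = pV w -> exists2 x, pA x = b & qs x = w.
Hypothesis lift_t : forall w b, qt b = pV w -> exists2 x, pA x = b & qt x = w.
Hypothesis pA_inj_s : forall x y, qs x = qs y -> pA x = pA y -> x = y.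
Hypothesis pA_inj_t : forall x y, qt x = qt y -> pA x = pA y -> x = y.

Lemma card_cover_s w : #|[set a | qs a == w]| = #|[set b | qs b == pV w]|.
Proof.
have -> : [set b | qs b == pV w] = pA @: [set a | qs a == w].
  apply/setP => b; rewrite inE; apply/eqP/imsetP => [/lift_s [x <- xw]|[x]].
    by exists x; rewrite ?inE ?xw.
  by rewrite inE => /eqP <- ->; rewrite pA_s.
by apply/esym/card_in_imset => x y; rewrite !inE => /eqP xw /eqP yw;
   apply: pA_inj_s; rewrite xw yw.
Qed.

Lemma card_cover_t w : #|[set a | qt a == w]| = #|[set b | qt b == pV w]|.
Proof.
have -> : [set b | qt b == pV w] = pA @: [set a | qt a == w].
  apply/setP => b; rewrite inE; apply/eqP/imsetP => [/lift_t [x <- xw]|[x]].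
    by exists x; rewrite ?inE ?xw.
  by rewrite inE => /eqP <- ->; rewrite pA_t.
by apply/esym/card_in_imset => x y; rewrite !inE => /eqP xw /eqP yw;
   apply: pA_inj_t; rewrite xw yw.
Qed.

Variables (KG KQ : nzRingType) (RG : elt G KG -> Prop) (RQ : elt Q KQ -> Prop).
Hypothesis R_compat : forall a b : qA G, qs a = qt b ->
  RG (pbasis KG (path2 a b)) <-> RQ (pbasis KQ (path2 (pA a) (pA b))).

Lemma cover_compat_in w a b : qs a = w -> qt b = w ->
  RG (pbasis KG (path2 a b)) <-> RQ (pbasis KQ (path2 (pA a) (pA b))).
Proof. by move=> aw bw; apply: R_compat; rewrite aw bw. Qed.

Lemma cover_gentle_in w :
  (forall a b c : qA Q, b != c -> qt b = pV w -> qt c = pV w -> qs a = pV w ->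
     exactly_one (RQ (pbasis KQ (path2 a b))) (RQ (pbasis KQ (path2 a c)))) <->
  (forall a b c : qA G, b != c -> qt b = w -> qt c = w -> qs a = w ->
     exactly_one (RG (pbasis KG (path2 a b))) (RG (pbasis KG (path2 a c)))).
Proof.
split=> gentle_w a b c bc bw cw aw.
  rewrite (exactly_one_iff (cover_compat_in aw bw) (cover_compat_in aw cw)).
  apply: gentle_w; rewrite -?pA_s -?pA_t ?aw ?bw ?cw //.
  by apply: contra bc => /eqP pbc; apply/eqP/pA_inj_t; rewrite ?bw ?cw.
have [b' pb bw'] := lift_t bw; have [c' pc cw'] := lift_t cw.
have [a' pa aw'] := lift_s aw; subst a b c.
rewrite -(exactly_one_iff (cover_compat_in aw' bw') (cover_compat_in aw' cw')).
by apply: gentle_w => //; apply: contra bc => /eqP ->.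
Qed.

Lemma cover_gentle_out w :
  (forall a c b : qA Q, a != c -> qs a = pV w -> qs c = pV w -> qt b = pV w ->
     exactly_one (RQ (pbasis KQ (path2 a b))) (RQ (pbasis KQ (path2 c b)))) <->
  (forall a c b : qA G, a != c -> qs a = w -> qs c = w -> qt b = w ->
     exactly_one (RG (pbasis KG (path2 a b))) (RG (pbasis KG (path2 c b)))).
Proof.
split=> gentle_w a c b ac aw cw bw.
  rewrite (exactly_one_iff (cover_compat_in aw bw) (cover_compat_in cw bw)).
  apply: gentle_w; rewrite -?pA_s -?pA_t ?aw ?bw ?cw //.
  by apply: contra ac => /eqP pac; apply/eqP/pA_inj_s; rewrite ?aw ?cw.
have [b' pb bw'] := lift_t bw; have [c' pc cw'] := lift_s cw.
have [a' pa aw'] := lift_s aw; subst a b c.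
rewrite -(exactly_one_iff (cover_compat_in aw' bw') (cover_compat_in cw' bw')).
by apply: gentle_w => //; apply: contra ac => /eqP ->.
Qed.

Lemma gentle_cover w : gentle RQ (pV w) <-> gentle RG w.
Proof.
rewrite /gentle card_cover_s card_cover_t.
by split=> -[out_le2 in_le2 /cover_gentle_in gin /cover_gentle_out gout].
Qed.

End Covering.

Section GammaCover.
Variables (Q : quiver) (M : vumod Q).
Local Notation G := (cq (Gamma M)).

Lemma Gamma_pi_s (x : qA G) : piV (qs x) = qs (piA x).
Proof. by move: x; rewrite /Gamma; case: (vk M). Qed.

Lemma Gamma_pi_t (x : qA G) : piV (qt x) = qt (piA x).
Proof. by move: x; rewrite /Gamma; case: (vk M). Qed.

Lemma Gamma_lift_s (w : qV G) (b : qA Q) :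
  qs b = piV w -> exists2 x : qA G, piA x = b & qs x = w.
Proof.
move: w; rewrite /Gamma; case: (vk M) => /= w bw; try by exists b.
by exists (b, w.2 (+) vtw M b); rewrite //= bw addbK -surjective_pairing.
Qed.

Lemma Gamma_lift_t (w : qV G) (b : qA Q) :
  qt b = piV w -> exists2 x : qA G, piA x = b & qt x = w.
Proof.
move: w; rewrite /Gamma; case: (vk M) => /= w bw; try by exists b.
by exists (b, w.2); rewrite //= bw -surjective_pairing.
Qed.

Lemma Gamma_inj_s (x y : qA G) : qs x = qs y -> piA x = piA y -> x = y.
Proof.
move: x y; rewrite /Gamma; case: (vk M) => /= x y // [_ xy2] xy1.
by case: x y xy1 xy2 => [x1 x2] [y1 y2] /= <- /addIb ->.
Qed.

Lemma Gamma_inj_t (x y : qA G) : qt x = qt y -> piA x = piA y -> x = y.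
Proof.
move: x y; rewrite /Gamma; case: (vk M) => /= x y // [_ xy2] xy1.
by case: x y xy1 xy2 => [x1 x2] [y1 y2] /= -> ->.
Qed.

Lemma Gamma_composable (a b : qA G) : qs a = qt b -> qs (piA a) = qt (piA b).
Proof. by move=> ab; rewrite -Gamma_pi_s -Gamma_pi_t ab. Qed.

Lemma Gamma_fiber (v : qV Q) : exists w : qV G, piV w = v.
Proof. by rewrite /Gamma; case: (vk M); [exists v | exists (v, false) | exists v]. Qed.

End GammaCover.

Section Complexification.
Variables (Q : quiver) (M : vumod Q) (I : elt Q (Cty (vk M)) -> Prop).
Variable Psi : TC M -> elt (cq (Gamma M)) CC.
Hypothesis Psi_iso : cplx_iso Psi.
Local Notation D := (Cty (vk M)).
Local Notation G := (cq (Gamma M)).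

(* Psi is C-linear, so it kills the zero of e (T (x) C) e. *)
Lemma Psi_zero z : eTe z -> z.1 = pzero -> z.2 = pzero -> Psi z = pzero.
Proof.
move=> ez z1 z2; have [[_ _ Psi_scale _ _] _] := Psi_iso.
have -> : z = TCscale 0 z.
  case: z ez z1 z2 => x y /= _ -> ->; rewrite /TCscale /rsc /padd /=.
  by congr pair; apply: functional_extensionality => r; rewrite /pzero !mulr0 ?oppr0 addr0.
by rewrite Psi_scale //; apply: functional_extensionality => q; rewrite mul0r.
Qed.

Hypothesis I_ideal : Tideal I.

Lemma J_basis_iff (a b : qA G) : qs a = qt b ->
  Jideal Psi I (pbasis CC (path2 a b)) <-> I (pbasis D (path2 (piA a) (piA b))).
Proof.
move=> ab; set q := path2 a b; set p := path2 (piA a) (piA b).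
have vq : valid q := path2_valid ab.
have vp : valid p := path2_valid (Gamma_composable ab).
have q_fiber : is_fiber q p by rewrite /is_fiber vq vp /q /p /= Gamma_pi_s !eqxx.
have [_ [Psi_inj _ Psi_paths]] := Psi_iso.
have [zq zq_p Psi_zq] : exists2 z, eMpe p z & Psi z = pbasis CC q.
  apply/(Psi_paths p vp); split; first exact: pbasis_palg.
  by move=> q' nfib; rewrite /pbasis; case: eqP => // qq; rewrite qq q_fiber in nfib.
split=> [[z zI Psi_z] | Ip].
- have zqz : zq = z.
    by apply: Psi_inj; [apply: eMpe_eTe zq_p | apply: eIe_eTe zI | rewrite Psi_z].
  subst zq; have [I1 I2] := eIe_I I_ideal zI; have [S1 S2] := eMpe_supp zq_p.
  case: (eqVneq (z.1 p) 0) => [z1p|]; last exact: basis_in_ideal I1 S1.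
  case: (eqVneq (z.2 p) 0) => [z2p|]; last exact: basis_in_ideal I2 S2.
  (* otherwise z = 0, whereas its image is a basis path *)
  have := Psi_zero (eIe_eTe I_ideal zI) (supp_on_zero S1 z1p) (supp_on_zero S2 z2p).
  by rewrite Psi_z => /(congr1 (fun g => g q)); rewrite /pbasis eqxx => /eqP; rewrite oner_eq0.
- exists zq => //; case: zq_p => w [[T1 T2] [S1 [S2 ->]]].
  by exists w; split; [|split] => //; apply: supported_in_ideal Ip _ _.
Qed.

End Complexification.

Theorem lemma5p1 (Q : quiver) (M : vumod Q)
    (I : elt Q (Cty (vk M)) -> Prop) (HI : admissible I)
    (Psi : TC M -> elt (cq (Gamma M)) CC) (HPsi : cplx_iso Psi)
    (v : qV Q) :
  gentle (R_I I) v <->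
  (forall w : qV (cq (Gamma M)), piV w = v -> gentle (Jideal Psi I) w).
Proof.
have [I_ideal _] := HI.
have compat (a b : qA (cq (Gamma M))) : qs a = qt b ->
    Jideal Psi I (pbasis CC (path2 a b)) <->
    R_I I (pbasis _ (path2 (piA a) (piA b))).
  by move=> ab; rewrite J_basis_iff // R_I_basis //; apply/path2_valid/Gamma_composable.
have transfer w := gentle_cover (@Gamma_pi_s _ M) (@Gamma_pi_t _ M)
  (@Gamma_lift_s _ M) (@Gamma_lift_t _ M) (@Gamma_inj_s _ M) (@Gamma_inj_t _ M) compat w.
split=> [gentle_v w wv | gentle_fibers]; first by apply/transfer; rewrite wv.
have [w0 w0v] := Gamma_fiber M v.
by rewrite -w0v; apply/transfer; apply: gentle_fibers.
Qed.
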